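(* Let $f$ be an L-additive arithmetic function whose associated completely multiplicative function $h_f$ is nonzero-valued. For an arithmetic function $g$ define its derivative $g'$ by $g'(n)=\frac{g(n)f(n)}{h_f(n)}$ for $n\geq1$. Then for all arithmetic functions $g$ and $h$: (a) $(g+h)'(n)=g'(n)+h'(n)$ for all $n\geq 1$; (b) $(g\ast h)'(n)=(g'\ast h)(n)+(g\ast h')(n)$ for all $n\geq 1$.
   Context: An arithmetic function $f:\mathbb{N}\to\mathbb{C}$ is L-additive if there is a completely multiplicative function $h_f$ such that $f(mn)=f(m)h_f(n)+f(n)h_f(m)$ for all positive integers $m,n$; such an $h_f$ is fixed. $\ast$ is Dirichlet convolution $(F\ast G)(n)=\sum_{d\mid n}F(d)G(n/d)$. *)

From HB Require Import structures.
From mathcomp Require Import all_boot all_order all_algebra.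
From mathcomp Require Import complex.
From mathcomp Require Import Rstruct.
Set Implicit Arguments. Unset Strict Implicit. Unset Printing Implicit Defensive.
Import Order.TTheory GRing.Theory Num.Theory.
Local Open Scope ring_scope.

Definition Cx : Type := complex.complex Rdefinitions.R.
Definition Cfield : fieldType := Cx.

(* Arithmetic functions N -> C; only values at n >= 1 are meaningful. *)
Definition arith := nat -> Cfield.

Definition completely_multiplicative (h : arith) : Prop :=
  h 1%N = 1 /\ forall m n : nat, (0 < m)%N -> (0 < n)%N -> h (m * n)%N = h m * h n.

Definition L_additive_wrt (f h : arith) : Prop :=
  completely_multiplicative h /\
  forall m n : nat, (0 < m)%N -> (0 < n)%N ->
    f (m * n)%N = f m * h n + f n * h m.

Definition dconv (F G : arith) : arith :=
  fun n => \sum_(d <- divisors n) F d * G (n %/ d)%N.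

Definition arith_add (F G : arith) : arith := fun n => F n + G n.

Definition deriv_f (f hf g : arith) : arith := fun n => g n * f n / hf n.

(** Dividing by the nonvanishing completely multiplicative [h_f] turns the
    L-additivity of [f] into complete additivity of [L := f / h_f], and the
    derivative is multiplication by [L].  Multiplication by a completely
    additive function is a derivation of the Dirichlet ring: on a term
    [g d * h (n/d)] of the convolution, [L n = L d + L (n/d)]. *)
From mathcomp Require Import all_boot all_order all_algebra.
Import GRing.Theory.
Local Open Scope ring_scope.

Definition completely_additive (L : arith) : Prop :=
  forall m n : nat, (0 < m)%N -> (0 < n)%N -> L (m * n)%N = L m + L n.

Lemma dconv_mul_completely_additive (L g h : arith) (n : nat) :
  completely_additive L -> (0 < n)%N ->
  dconv g h n * L n =
  dconv (fun k => g k * L k) h n + dconv g (fun k => h k * L k) n.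
Proof.
move=> L_add n_gt0; rewrite /dconv -big_split /= mulr_suml.
apply: eq_big_seq => d; rewrite -dvdn_divisors // => d_dvd_n.
have d_gt0 : (0 < d)%N by apply: dvdn_gt0 n_gt0 d_dvd_n.
have nd_gt0 : (0 < n %/ d)%N by rewrite divn_gt0 // dvdn_leq.
by rewrite -{2}(divnK d_dvd_n) mulnC L_add // mulrDr mulrAC mulrA.
Qed.

Lemma L_additive_div_completely_additive (f hf : arith) :
  L_additive_wrt f hf -> (forall n : nat, (0 < n)%N -> hf n != 0) ->
  completely_additive (fun n => f n / hf n).
Proof.
move=> [[_ hf_mul] f_mul] hf_neq0 m n m_gt0 n_gt0 /=.
by rewrite f_mul // hf_mul // addf_div ?hf_neq0.
Qed.

Lemma deriv_fE (f hf g : arith) (n : nat) :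
  deriv_f f hf g n = g n * (f n / hf n).
Proof. by rewrite /deriv_f mulrA. Qed.

Theorem theorem2p7 (f hf : arith)
  (Hf : L_additive_wrt f hf)
  (Hnz : forall n : nat, (0 < n)%N -> hf n != 0) :
  forall g h : arith,
    (forall n : nat, (0 < n)%N ->
       deriv_f f hf (arith_add g h) n = arith_add (deriv_f f hf g) (deriv_f f hf h) n) /\
    (forall n : nat, (0 < n)%N ->
       deriv_f f hf (dconv g h) n =
       dconv (deriv_f f hf g) h n + dconv g (deriv_f f hf h) n).
Proof.
move=> g h; split=> n n_gt0.
  by rewrite /deriv_f /arith_add !mulrDl.
have L_add := L_additive_div_completely_additive _ _ Hf Hnz.
rewrite deriv_fE (dconv_mul_completely_additive _ g h _ L_add n_gt0) /dconv.
by congr (_ + _); apply: eq_bigr => d _; rewrite deriv_fE.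
Qed.
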